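(* Let $(E,\|\cdot\|)$ be a real Banach space, $I=[a,b]$ a closed real interval, $E_0=C(I,E)$ the space of continuous functions $\varphi:I\to E$ with the supremum norm $\|\varphi\|_0=\sup\{\|\varphi(t)\|: t\in I\}$ and metric $D(\varphi,\xi)=\|\varphi-\xi\|_0$, fix $c\in I$, and let $\mathcal{R}_c=\{\varphi\in E_0: \|\varphi\|_0=\|\varphi(c)\|\}$. Let $\mathcal{K}$ be the set of constant functions in $E_0$. Suppose $\mathcal{R}_c$ is algebraically closed, i.e. $\varphi,\xi\in\mathcal{R}_c$ implies $\varphi-\xi\in\mathcal{R}_c$ (equivalently, $\mathcal{R}_c$ is additive). Then $\mathcal{R}_c=\mathcal{K}$; hence $\mathcal{R}_c$ is also $D$-closed in $E_0$. *)

From HB Require Import structures.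
From mathcomp Require Import all_boot all_order all_algebra.
From mathcomp Require Import all_classical all_reals all_analysis.
Set Implicit Arguments. Unset Strict Implicit. Unset Printing Implicit Defensive.
Import Order.TTheory GRing.Theory Num.Theory.
Import numFieldNormedType.Exports.
Local Open Scope classical_set_scope.
Local Open Scope ring_scope.

(* Elements of E_0 = C([a,b], E) are represented by functions R -> E that are
   continuous on [a,b]; only their values on [a,b] matter for all notions below. *)
Definition E0 (R : realType) (E : completeNormedModType R) (a b : R)
  : set (R -> E) := [set phi | {within `[a, b], continuous phi}].

Definition supnorm (R : realType) (E : completeNormedModType R) (a b : R)
  (phi : R -> E) : R := sup [set `|phi t| | t in `[a, b]].

Definition Dist (R : realType) (E : completeNormedModType R) (a b : R)
  (phi xi : R -> E) : R := supnorm a b (phi \- xi).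

Definition Rc (R : realType) (E : completeNormedModType R) (a b c : R)
  : set (R -> E) := [set phi | E0 a b phi /\ supnorm a b phi = `|phi c|].

Definition Kconst (R : realType) (E : completeNormedModType R) (a b : R)
  : set (R -> E) :=
  [set phi | E0 a b phi /\ exists v : E, forall t, t \in `[a, b] -> phi t = v].

Definition D_closed (R : realType) (E : completeNormedModType R) (a b : R)
  (S : set (R -> E)) : Prop :=
  forall phi, E0 a b phi ->
    (forall eps : R, 0 < eps -> exists2 psi, S psi & Dist a b phi psi < eps) ->
    S phi.

From HB Require Import structures.
From mathcomp Require Import all_boot all_order all_algebra.
From mathcomp Require Import all_classical all_reals all_analysis.
Import Order.TTheory GRing.Theory Num.Theory.
Import numFieldNormedType.Exports.
Local Open Scope classical_set_scope.
Local Open Scope ring_scope.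
Set Implicit Arguments. Unset Strict Implicit. Unset Printing Implicit Defensive.

(* If phi is in R_c, so is phi - phi(c) (constants lie in R_c), and its
   supremum norm is its norm at c, namely 0; hence phi is constant.  Finally, a uniform limit of
   constants is constant: |phi t - phi s| <= 2 D(phi, psi) for psi constant. *)

Section SupNorm.
Variables (R : realType) (E : completeNormedModType R) (a b : R).

Lemma E0B (phi xi : R -> E) : E0 a b phi -> E0 a b xi -> E0 a b (phi \- xi).
Proof. by move=> hphi hxi x; apply: cvgB; [exact: hphi | exact: hxi]. Qed.

Lemma E0_cst (v : E) : E0 a b (cst v).
Proof. by move=> x; exact: cvg_cst. Qed.

Lemma E0_has_ubound_norm (phi : R -> E) :
  E0 a b phi -> has_ubound [set `|phi t| | t in `[a, b]].
Proof.
move=> hphi.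
have [M [_ HM]] := compact_bounded (continuous_compact hphi (@segment_compact R a b)).
exists (M + 1) => _ [t ht <-].
by apply: (HM (M + 1)); [rewrite ltrDl | exists t].
Qed.

Lemma le_supnorm (phi : R -> E) t :
  E0 a b phi -> t \in `[a, b] -> `|phi t| <= supnorm a b phi.
Proof.
move=> hphi ht; apply: sup_upper_bound; last by exists t.
by split; [exists `|phi t|, t | exact: E0_has_ubound_norm].
Qed.

Lemma supnorm_const (phi : R -> E) (v : E) (c : R) : c \in `[a, b] ->
  (forall t, t \in `[a, b] -> phi t = v) -> supnorm a b phi = `|v|.
Proof.
move=> hc hv; rewrite /supnorm.
suff -> : [set `|phi t| | t in `[a, b]] = [set `|v|] by rewrite sup1.
apply/seteqP; split => x; first by case=> t ht <-; rewrite /= hv.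
by move=> ->; exists c => //; rewrite hv.
Qed.

Lemma normB_le_Dist_const (phi psi : R -> E) (v : E) t s :
  E0 a b phi -> E0 a b psi -> (forall u, u \in `[a, b] -> psi u = v) ->
  t \in `[a, b] -> s \in `[a, b] -> `|phi t - phi s| <= Dist a b phi psi *+ 2.
Proof.
move=> hphi hpsi hv ht hs.
have hd := E0B hphi hpsi.
have -> : phi t - phi s = (phi \- psi) t - (phi \- psi) s.
  by rewrite /= (hv t ht) (hv s hs) opprB addrA subrK.
rewrite mulr2n; apply: (le_trans (ler_normB _ _)).
by apply: lerD; exact: le_supnorm.
Qed.

Lemma Kconst_D_closed : D_closed a b (Kconst (E:=E) a b).
Proof.
move=> phi hphi happ; split => //; exists (phi a) => t ht.
have ha : a \in `[a, b].
  by move: ht; rewrite !in_itv /= lexx => /andP[le_at le_tb]; exact: le_trans le_at le_tb.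
apply/eqP; rewrite -subr_eq0 -normr_le0; apply/ler_addgt0Pl => e e0.
have [psi [hpsi [v hv]] hD] := happ (e / 2) (divr_gt0 e0 (ltr0Sn _ 1)).
rewrite addr0; apply: (le_trans (normB_le_Dist_const hphi hpsi hv ht ha)).
by rewrite [leRHS](splitr e) -mulr2n lerMn2r /= ltW.
Qed.

End SupNorm.

Section SupAttainedAtC.
Variables (R : realType) (E : completeNormedModType R) (a b c : R).
Hypothesis hc : c \in `[a, b].

Lemma Kconst_sub_Rc : Kconst (E:=E) a b `<=` Rc a b c.
Proof.
move=> phi [hphi [v hv]]; split => //.
by rewrite (supnorm_const hc hv) (hv c hc).
Qed.

Lemma Rc_subB_closed_sub_Kconst :
  (forall phi xi : R -> E, Rc a b c phi -> Rc a b c xi -> Rc a b c (phi \- xi)) ->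
  Rc a b c `<=` Kconst (E:=E) a b.
Proof.
move=> hadd phi hRc; split; first by case: hRc.
exists (phi c) => t ht.
have hK : Rc a b c (cst (phi c)) by apply: Kconst_sub_Rc; split; [exact: E0_cst | exists (phi c)].
have [hd hsupd] := hadd _ _ hRc hK.
have := le_supnorm hd ht.
by rewrite hsupd /= subrr normr0 normr_le0 subr_eq0 => /eqP.
Qed.

End SupAttainedAtC.

Theorem proposition3 (R : realType) (E : completeNormedModType R) (a b c : R)
  (hab : a <= b) (hc : c \in `[a, b])
  (hadd : forall phi xi : R -> E, Rc a b c phi -> Rc a b c xi -> Rc a b c (phi \- xi)) :
  Rc a b c = Kconst a b :> set (R -> E) /\ D_closed a b (Rc (E:=E) a b c).
Proof.
have eqK : Rc a b c = Kconst a b :> set (R -> E).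
  apply/seteqP; split; [exact: Rc_subB_closed_sub_Kconst hc hadd | exact: Kconst_sub_Rc hc].
by split => //; rewrite eqK; exact: Kconst_D_closed.
Qed.
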